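(* Let $a>b>0$, $c>0$, let $C=\{(x,y,z)\in\mathbb{R}^3:\frac{x^2}{a^2}+\frac{y^2}{b^2}-\frac{z^2}{c^2}=0\}$, and consider the spherical conic $C\cap\mathbb{S}^2$. The orthogonal projection of this conic onto the $yz$-plane (the plane of the principal and minor axes) is contained in a hyperbola, and the lines in which the two cyclic planes of $C$ intersect the $yz$-plane are the asymptotes of this hyperbola.
   Context: A cyclic plane of a quadratic cone (apex at the origin) is a plane through the origin such that every parallel plane not through the origin intersects the cone in a circle (with respect to the standard Euclidean metric of $\mathbb{R}^3$). $\mathbb{S}^2$ is the unit sphere. *)

From Stdlib Require Import Reals.
Open Scope R_scope.

Definition pt3 : Type := (R * R * R)%type.
Definition pt2 : Type := (R * R)%type.

Definition dot3 (p q : pt3) : R :=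
  let '(x1, y1, z1) := p in let '(x2, y2, z2) := q in x1 * x2 + y1 * y2 + z1 * z2.
Definition sub3 (p q : pt3) : pt3 :=
  let '(x1, y1, z1) := p in let '(x2, y2, z2) := q in (x1 - x2, y1 - y2, z1 - z2).

Definition dot2 (p q : pt2) : R := fst p * fst q + snd p * snd q.
Definition sub2 (p q : pt2) : pt2 := (fst p - fst q, snd p - snd q).
Definition add2 (p q : pt2) : pt2 := (fst p + fst q, snd p + snd q).
Definition scal2 (t : R) (p : pt2) : pt2 := (t * fst p, t * snd p).

Definition same_set {T : Type} (A B : T -> Prop) : Prop := forall x, A x <-> B x.

Definition cone (a b c : R) (p : pt3) : Prop :=
  let '(x, y, z) := p in x ^ 2 / a ^ 2 + y ^ 2 / b ^ 2 - z ^ 2 / c ^ 2 = 0.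

Definition sphere2 (p : pt3) : Prop := dot3 p p = 1.

Definition is_circle3 (S : pt3 -> Prop) : Prop :=
  exists (ctr m : pt3) (r : R),
    m <> (0, 0, 0) /\ 0 < r /\
    forall p, S p <-> (dot3 (sub3 p ctr) m = 0 /\ dot3 (sub3 p ctr) (sub3 p ctr) = r ^ 2).

(** A cyclic plane of the cone K (apex at the origin): a plane through the
    origin (normal n) such that every parallel plane not through the origin
    (n . p = d, d <> 0) meets K in a circle. *)
Definition cyclic_plane (K : pt3 -> Prop) (P : pt3 -> Prop) : Prop :=
  exists n : pt3, n <> (0, 0, 0) /\
    (forall p, P p <-> dot3 n p = 0) /\
    forall d : R, d <> 0 -> is_circle3 (fun p => dot3 n p = d /\ K p).

Definition hyp_data_ok (e1 e2 : pt2) (p q : R) : Prop :=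
  dot2 e1 e1 = 1 /\ dot2 e2 e2 = 1 /\ dot2 e1 e2 = 0 /\ 0 < p /\ 0 < q.

Definition hyperbola (w0 e1 e2 : pt2) (p q : R) (w : pt2) : Prop :=
  (dot2 (sub2 w w0) e1) ^ 2 / p ^ 2 - (dot2 (sub2 w w0) e2) ^ 2 / q ^ 2 = 1.

Definition line2 (w0 d : pt2) (w : pt2) : Prop := exists t : R, w = add2 w0 (scal2 t d).

Definition is_asymptote (w0 e1 e2 : pt2) (p q : R) (L : pt2 -> Prop) : Prop :=
  same_set L (line2 w0 (add2 (scal2 p e1) (scal2 q e2))) \/
  same_set L (line2 w0 (add2 (scal2 p e1) (scal2 (- q) e2))).

Definition proj_yz (p : pt3) : pt2 := let '(_, y, z) := p in (y, z).

Definition trace_yz (P : pt3 -> Prop) (w : pt2) : Prop := P (0, fst w, snd w).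

(* Write the cone as Q = 0 with Q = A x^2 + B y^2 + C z^2, where C < 0 < A < B,
   and put s^2 = B - A, u^2 = A - C.  Since Q - A |p|^2 = (s y + u z)(s y - u z),
   on every plane s y +- u z = d <> 0 the cone equation is that of a sphere, so
   these two planes are cyclic.  Conversely, if the sections parallel to a plane
   are circles, then Q is a multiple of |p|^2 on that plane; for a diagonal form
   with distinct coefficients this forces the plane to be one of the two above.
   On the unit sphere, eliminating x^2 = 1 - y^2 - z^2 leaves u^2 z^2 - s^2 y^2 = A,
   a hyperbola whose asymptotes s y = +- u z are the traces of the cyclic planes. *)

From Stdlib Require Import Reals Lra.
Open Scope R_scope.

Lemma dot3E a1 a2 a3 b1 b2 b3 :
  dot3 (a1, a2, a3) (b1, b2, b3) = a1 * b1 + a2 * b2 + a3 * b3.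
Proof. reflexivity. Qed.

Lemma sub3E a1 a2 a3 b1 b2 b3 :
  sub3 (a1, a2, a3) (b1, b2, b3) = (a1 - b1, a2 - b2, a3 - b3).
Proof. reflexivity. Qed.

Lemma same_set_refl {T : Type} (X : T -> Prop) : same_set X X.
Proof. intro x; reflexivity. Qed.

Lemma same_set_sym {T : Type} (X Y : T -> Prop) : same_set X Y -> same_set Y X.
Proof. intros H x; symmetry; apply H. Qed.

Lemma same_set_trans_r {T : Type} (X Y Z : T -> Prop) :
  same_set Y Z -> (same_set X Y <-> same_set X Z).
Proof. unfold same_set; firstorder. Qed.

Lemma pow2_gt_0 (x : R) : x <> 0 -> 0 < x ^ 2.
Proof. intro Hx; rewrite <- Rsqr_pow2; exact (Rsqr_pos_lt x Hx). Qed.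

Lemma dot3_self_eq0 (w : pt3) : dot3 w w = 0 -> w = (0, 0, 0).
Proof.
  destruct w as [[w1 w2] w3]; rewrite dot3E; intro Hw.
  assert (w1 = 0) by nra; assert (w2 = 0) by nra; assert (w3 = 0) by nra.
  now subst.
Qed.

Lemma dot3_self_pos (w : pt3) : w <> (0, 0, 0) -> 0 < dot3 w w.
Proof.
  intro Hw.
  assert (0 <= dot3 w w) by (destruct w as [[w1 w2] w3]; rewrite dot3E; nra).
  destruct (Req_dec (dot3 w w) 0) as [H0|]; [now apply dot3_self_eq0 in H0|lra].
Qed.

Lemma dot3_orth_sym (m n : pt3) :
  n <> (0, 0, 0) -> (forall w, dot3 m w = 0 -> dot3 n w = 0) ->
  forall w, dot3 n w = 0 -> dot3 m w = 0.
Proof.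
  destruct m as [[m1 m2] m3], n as [[n1 n2] n3].
  intros Hn Hmn [[w1 w2] w3]; rewrite !dot3E; intro Hw.
  (* testing the hypothesis on m x e_1, m x e_2, m x e_3 shows n x m = 0 *)
  assert (x1 := Hmn (0, m3, - m2) ltac:(rewrite dot3E; ring)).
  assert (x2 := Hmn (m3, 0, - m1) ltac:(rewrite dot3E; ring)).
  assert (x3 := Hmn (m2, - m1, 0) ltac:(rewrite dot3E; ring)).
  rewrite dot3E in x1, x2, x3.
  set (mw := m1 * w1 + m2 * w2 + m3 * w3).
  destruct (Req_dec mw 0) as [|Hmw]; [assumption|exfalso; apply Hn].
  assert (E1 : n1 * mw = m1 * (n1 * w1 + n2 * w2 + n3 * w3)
                         + w2 * (n1 * m2 + n2 * - m1 + n3 * 0)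
                         + w3 * (n1 * m3 + n2 * 0 + n3 * - m1)) by (unfold mw; ring).
  assert (E2 : n2 * mw = m2 * (n1 * w1 + n2 * w2 + n3 * w3)
                         - w1 * (n1 * m2 + n2 * - m1 + n3 * 0)
                         + w3 * (n1 * 0 + n2 * m3 + n3 * - m2)) by (unfold mw; ring).
  assert (E3 : n3 * mw = m3 * (n1 * w1 + n2 * w2 + n3 * w3)
                         - w1 * (n1 * m3 + n2 * 0 + n3 * - m1)
                         - w2 * (n1 * 0 + n2 * m3 + n3 * - m2)) by (unfold mw; ring).
  rewrite Hw, x3, x2 in E1; rewrite Hw, x3, x1 in E2; rewrite Hw, x2, x1 in E3.
  assert (n1 = 0) by (apply (Rmult_eq_reg_r mw); [lra|exact Hmw]).
  assert (n2 = 0) by (apply (Rmult_eq_reg_r mw); [lra|exact Hmw]).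
  assert (n3 = 0) by (apply (Rmult_eq_reg_r mw); [lra|exact Hmw]).
  now subst.
Qed.

Definition normal_plane (n : pt3) (p : pt3) : Prop := dot3 n p = 0.

Lemma same_normal_plane (m n : pt3) :
  n <> (0, 0, 0) -> (forall w, dot3 m w = 0 -> dot3 n w = 0) ->
  same_set (normal_plane n) (normal_plane m).
Proof.
  intros Hn Hmn w; unfold normal_plane; split.
  - exact (dot3_orth_sym m n Hn Hmn w).
  - exact (Hmn w).
Qed.

Lemma is_circle3_ext (S S' : pt3 -> Prop) : same_set S S' -> is_circle3 S -> is_circle3 S'.
Proof.
  intros HS (ctr & m & r & Hm & Hr & Hc).
  exists ctr, m, r; split; [exact Hm|]; split; [exact Hr|].
  intro p; rewrite <- (HS p); apply Hc.
Qed.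

Lemma sphere_plane_is_circle3 (n c : pt3) (d R2 : R) :
  n <> (0, 0, 0) -> (d - dot3 n c) ^ 2 < R2 * dot3 n n ->
  is_circle3 (fun p => dot3 n p = d /\ dot3 (sub3 p c) (sub3 p c) = R2).
Proof.
  intros Hn Hlt; pose proof (dot3_self_pos n Hn) as HN.
  destruct n as [[n1 n2] n3], c as [[c1 c2] c3]; rewrite !dot3E in *.
  set (N := n1 * n1 + n2 * n2 + n3 * n3) in *.
  set (nc := n1 * c1 + n2 * c2 + n3 * c3) in *.
  set (k := (d - nc) / N).
  assert (hk : k * N = d - nc) by (unfold k; field; lra).
  assert (Hrad : 0 < R2 - k ^ 2 * N).
  { apply (Rmult_lt_reg_r N); [lra|].
    replace ((R2 - k ^ 2 * N) * N) with (R2 * N - (k * N) ^ 2) by ring.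
    rewrite hk; lra. }
  (* the centre is the foot of the perpendicular from c to the plane *)
  exists (c1 + k * n1, c2 + k * n2, c3 + k * n3), (n1, n2, n3), (sqrt (R2 - k ^ 2 * N)).
  split; [exact Hn|]; split; [now apply sqrt_lt_R0|].
  intros [[x y] z]; rewrite !sub3E, !dot3E, pow2_sqrt by lra.
  set (np := n1 * x + n2 * y + n3 * z).
  assert (E1 : (x - (c1 + k * n1)) * n1 + (y - (c2 + k * n2)) * n2 + (z - (c3 + k * n3)) * n3
               = np - nc - k * N) by (unfold np, nc, N; ring).
  assert (E2 : (x - (c1 + k * n1)) * (x - (c1 + k * n1)) + (y - (c2 + k * n2)) * (y - (c2 + k * n2))
               + (z - (c3 + k * n3)) * (z - (c3 + k * n3))
               = (x - c1) * (x - c1) + (y - c2) * (y - c2) + (z - c3) * (z - c3)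
                 - 2 * k * (np - nc) + k ^ 2 * N) by (unfold np, nc, N; ring).
  rewrite E1, E2; split; intros [h1 h2].
  - rewrite h1, h2, <- hk; split; ring.
  - assert (h3 : np = d) by lra.
    split; [exact h3|]. rewrite h3, <- hk in h2; lra.
Qed.

Lemma circle_chord (S : pt3 -> Prop) (c1 c2 c3 : R) (m : pt3) (r : R) :
  (forall p, S p <-> dot3 (sub3 p (c1, c2, c3)) m = 0 /\
                    dot3 (sub3 p (c1, c2, c3)) (sub3 p (c1, c2, c3)) = r ^ 2) ->
  forall w1 w2 w3 l, dot3 m (w1, w2, w3) = 0 ->
  l ^ 2 * dot3 (w1, w2, w3) (w1, w2, w3) = r ^ 2 ->
  S (c1 + l * w1, c2 + l * w2, c3 + l * w3).
Proof.
  intros Hc w1 w2 w3 l Hw Hl; destruct m as [[m1 m2] m3]; rewrite !dot3E in Hw, Hl.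
  apply Hc; rewrite !sub3E, !dot3E; split.
  - transitivity (l * (m1 * w1 + m2 * w2 + m3 * w3)); [ring|rewrite Hw; ring].
  - rewrite <- Hl; ring.
Qed.

Definition diag_form (A B C : R) (p : pt3) : R :=
  let '(x, y, z) := p in A * x ^ 2 + B * y ^ 2 + C * z ^ 2.

Definition diag_cone (A B C : R) (p : pt3) : Prop := diag_form A B C p = 0.

Lemma cone_diag_cone (a b c : R) :
  same_set (cone a b c) (diag_cone (/ a ^ 2) (/ b ^ 2) (- / c ^ 2)).
Proof.
  intros [[x y] z]; unfold cone, diag_cone, diag_form, Rdiv.
  replace (x ^ 2 * / a ^ 2 + y ^ 2 * / b ^ 2 - z ^ 2 * / c ^ 2)
    with (/ a ^ 2 * x ^ 2 + / b ^ 2 * y ^ 2 + - / c ^ 2 * z ^ 2) by ring.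
  reflexivity.
Qed.

Lemma cyclic_plane_ext (K K' P P' : pt3 -> Prop) :
  same_set K K' -> same_set P P' -> cyclic_plane K P -> cyclic_plane K' P'.
Proof.
  intros HK HP (n & Hn & HnP & Hc).
  exists n; split; [exact Hn|]; split.
  - intro p; rewrite <- (HP p); apply HnP.
  - intros d Hd; apply (is_circle3_ext _ _ (fun p => and_iff_compat_l _ (HK p)) (Hc d Hd)).
Qed.

Section DiagonalCone.

Variables A B C : R.

Lemma cyclic_plane_diag_cone (s u : R) :
  0 < A -> C < 0 -> s ^ 2 = B - A -> u ^ 2 = A - C ->
  cyclic_plane (diag_cone A B C) (normal_plane (0, s, u)).
Proof.
  intros HA HC Hs Hu.
  assert (Hn : (0, s, u) <> (0, 0, 0)) by (intro h; injection h as _ ->; nra).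
  exists (0, s, u); split; [exact Hn|]; split; [intro p; reflexivity|].
  intros d Hd.
  set (c := (0, - d * s / (2 * A), d * u / (2 * A))).
  set (R2 := d ^ 2 * (s ^ 2 + u ^ 2) / (4 * A ^ 2)).
  (* Q = A |p|^2 + (s y + u z)(s y - u z), so on the plane s y + u z = d the
     cone is the sphere of centre c and squared radius R2 *)
  assert (E : forall x y z, s * y + u * z = d ->
            diag_form A B C (x, y, z) = A * (dot3 (sub3 (x, y, z) c) (sub3 (x, y, z) c) - R2)).
  { intros x y z Hp; unfold c, R2, diag_form; rewrite sub3E, dot3E, <- Hp.
    replace B with (s ^ 2 + A) by lra; replace C with (A - u ^ 2) by lra.
    field; lra. }
  apply (is_circle3_ext (fun p => dot3 (0, s, u) p = d /\ dot3 (sub3 p c) (sub3 p c) = R2)).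
  - intros [[x y] z]; unfold diag_cone; rewrite dot3E.
    split; intros [h1 h2]; split; try exact h1; rewrite E in * by lra.
    + rewrite h2; ring.
    + apply Rmult_integral in h2 as [h2|h2]; lra.
  - apply sphere_plane_is_circle3; [exact Hn|].
    assert (Hd2 : 0 < d ^ 2) by (apply pow2_gt_0; exact Hd).
    assert (Hpos : 0 < d ^ 2 * ((s ^ 2 + A) * (u ^ 2 - A)) / A ^ 2).
    { apply Rdiv_lt_0_compat; [apply Rmult_lt_0_compat; [exact Hd2|]|]; nra. }
    enough (R2 * dot3 (0, s, u) (0, s, u) - (d - dot3 (0, s, u) c) ^ 2
            = d ^ 2 * ((s ^ 2 + A) * (u ^ 2 - A)) / A ^ 2) by lra.
    unfold c, R2; rewrite !dot3E; field; lra.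
Qed.

Lemma circle_section_conformal (n : pt3) (d : R) :
  is_circle3 (fun p => dot3 n p = d /\ diag_cone A B C p) ->
  exists (m : pt3) (lam : R), m <> (0, 0, 0) /\
    forall w, dot3 m w = 0 -> dot3 n w = 0 /\ diag_form A B C w = lam * dot3 w w.
Proof.
  intros ([[c1 c2] c3] & m & r & Hm & Hr & Hc).
  exists m, (- diag_form A B C (c1, c2, c3) / r ^ 2); split; [exact Hm|].
  intros [[w1 w2] w3] Hw.
  destruct (Req_dec (dot3 (w1, w2, w3) (w1, w2, w3)) 0) as [H0|H0].
  { rewrite (dot3_self_eq0 _ H0); destruct n as [[n1 n2] n3]; cbn; split; ring. }
  assert (HW : 0 < dot3 (w1, w2, w3) (w1, w2, w3)).
  { apply dot3_self_pos; intro h; rewrite h in H0; apply H0; cbn; ring. }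
  set (W := dot3 (w1, w2, w3) (w1, w2, w3)) in *.
  set (l := r / sqrt W).
  assert (Hl : l ^ 2 * W = r ^ 2).
  { unfold l; rewrite <- (pow2_sqrt W) at 2 by lra.
    field; apply Rgt_not_eq, sqrt_lt_R0; exact HW. }
  assert (Hl0 : l <> 0) by (intro h; rewrite h in Hl; nra).
  destruct (circle_chord _ _ _ _ _ _ Hc w1 w2 w3 l Hw Hl) as [Hp1 Hp2].
  assert (Hl' : (- l) ^ 2 * W = r ^ 2) by (rewrite <- Hl; ring).
  destruct (circle_chord _ _ _ _ _ _ Hc w1 w2 w3 (- l) Hw Hl') as [Hm1 Hm2].
  destruct n as [[n1 n2] n3]; unfold diag_cone, diag_form in *; rewrite !dot3E in *.
  split.
  - apply (Rmult_eq_reg_l (2 * l)); [|lra].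
    transitivity ((n1 * (c1 + l * w1) + n2 * (c2 + l * w2) + n3 * (c3 + l * w3))
                - (n1 * (c1 + - l * w1) + n2 * (c2 + - l * w2) + n3 * (c3 + - l * w3)));
      [ring|lra].
  - (* Q(c + l w) + Q(c - l w) = 2 Q(c) + 2 l^2 Q(w) *)
    set (Qw := A * w1 ^ 2 + B * w2 ^ 2 + C * w3 ^ 2).
    set (Qc := A * c1 ^ 2 + B * c2 ^ 2 + C * c3 ^ 2).
    assert (HQ : Qc + l ^ 2 * Qw = 0).
    { transitivity ((A * (c1 + l * w1) ^ 2 + B * (c2 + l * w2) ^ 2 + C * (c3 + l * w3) ^ 2
                   + (A * (c1 + - l * w1) ^ 2 + B * (c2 + - l * w2) ^ 2
                      + C * (c3 + - l * w3) ^ 2)) / 2); [unfold Qc, Qw; field|lra]. }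
    assert (Hr2 : r ^ 2 <> 0) by (apply Rgt_not_eq, pow_lt; exact Hr).
    apply (Rmult_eq_reg_r (r ^ 2)); [|exact Hr2].
    replace (- Qc / r ^ 2 * W * r ^ 2) with (- Qc * W) by (field; lra).
    rewrite <- Hl.
    transitivity (- Qc * W + (Qc + l ^ 2 * Qw) * W); [ring|rewrite HQ; ring].
Qed.

Lemma conformal_plane_diag_form (lam n1 n2 n3 : R) :
  C < A < B -> (n1, n2, n3) <> (0, 0, 0) ->
  (forall w, dot3 (n1, n2, n3) w = 0 -> diag_form A B C w = lam * dot3 w w) ->
  n1 = 0 /\ lam = A.
Proof.
  intros [HCA HAB] Hn Hconf.
  assert (T : forall w1 w2 w3, n1 * w1 + n2 * w2 + n3 * w3 = 0 ->
            (A - lam) * w1 ^ 2 + (B - lam) * w2 ^ 2 + (C - lam) * w3 ^ 2 = 0).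
  { intros w1 w2 w3 hw; pose proof (Hconf (w1, w2, w3) hw) as h.
    unfold diag_form in h; rewrite dot3E in h; lra. }
  pose proof (T n2 (- n1) 0 ltac:(ring)) as T1.
  pose proof (T n3 0 (- n1) ltac:(ring)) as T2.
  pose proof (T 0 n3 (- n2) ltac:(ring)) as T3.
  pose proof (T n2 (n3 - n1) (- n2) ltac:(ring)) as T4.
  pose proof (T n3 n3 (- n1 - n2) ltac:(ring)) as T5.
  assert (HB3 : (B - lam) * (n1 * n3) = 0) by lra.
  assert (HC2 : (C - lam) * (n1 * n2) = 0) by lra.
  assert (Hn1 : n1 = 0).
  { destruct (Req_dec n1 0) as [|h1]; [assumption|exfalso].
    assert (0 < n1 ^ 2) by (apply pow2_gt_0; exact h1).
    destruct (Rle_or_lt (B - lam) 0).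
    - nra.
    - assert (n3 = 0) by (apply (Rmult_eq_reg_l ((B - lam) * n1)); [lra|nra]).
      subst n3; nra. }
  subst n1; split; [reflexivity|].
  destruct (Req_dec n2 0) as [->|h2].
  - assert (h3 : n3 <> 0) by (intro h; subst; now apply Hn).
    assert (0 < n3 ^ 2) by (apply pow2_gt_0; exact h3).
    apply (Rmult_eq_reg_r (n3 ^ 2)); lra.
  - assert (0 < n2 ^ 2) by (apply pow2_gt_0; exact h2).
    apply (Rmult_eq_reg_r (n2 ^ 2)); lra.
Qed.

Lemma cyclic_plane_diag_cone_cases (s u : R) (P : pt3 -> Prop) :
  C < A < B -> 0 < s -> s ^ 2 = B - A -> u ^ 2 = A - C ->
  cyclic_plane (diag_cone A B C) P ->
  same_set P (normal_plane (0, s, u)) \/ same_set P (normal_plane (0, s, - u)).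
Proof.
  intros HCAB Hs0 Hs Hu ([[n1 n2] n3] & Hn & HP & Hcirc).
  destruct (circle_section_conformal _ _ (Hcirc 1 R1_neq_R0)) as (m & lam & Hm & Hmn).
  assert (Hconf : forall w, dot3 (n1, n2, n3) w = 0 -> diag_form A B C w = lam * dot3 w w).
  { intros w hw; apply Hmn.
    exact (dot3_orth_sym m _ Hn (fun w hw => proj1 (Hmn w hw)) w hw). }
  destruct (conformal_plane_diag_form lam n1 n2 n3 HCAB Hn Hconf) as [-> ->].
  pose proof (Hconf (0, n3, - n2) ltac:(rewrite dot3E; ring)) as h.
  unfold diag_form in h; rewrite dot3E in h.
  assert (hq : (s * n3 - u * n2) * (s * n3 + u * n2) = 0).
  { replace ((s * n3 - u * n2) * (s * n3 + u * n2)) with (s ^ 2 * n3 ^ 2 - u ^ 2 * n2 ^ 2)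
      by ring.
    rewrite Hs, Hu; lra. }
  apply Rmult_integral in hq as [hq|hq]; [left|right];
    refine (proj1 (same_set_trans_r _ _ _ (same_normal_plane _ (0, n2, n3) Hn _)) HP);
    intros [[w1 w2] w3]; rewrite !dot3E; intro hw; (apply (Rmult_eq_reg_l s); [|lra]).
  - transitivity (n2 * (0 * w1 + s * w2 + u * w3) + w3 * (s * n3 - u * n2)); [ring|].
    rewrite hw, hq; ring.
  - transitivity (n2 * (0 * w1 + s * w2 + - u * w3) + w3 * (s * n3 + u * n2)); [ring|].
    rewrite hw, hq; ring.
Qed.

Lemma cyclic_plane_diag_cone_iff (s u : R) (P : pt3 -> Prop) :
  0 < A < B -> C < 0 -> 0 < s -> s ^ 2 = B - A -> u ^ 2 = A - C ->
  cyclic_plane (diag_cone A B C) P <->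
  same_set P (normal_plane (0, s, u)) \/ same_set P (normal_plane (0, s, - u)).
Proof.
  intros [HA HAB] HC Hs0 Hs Hu; split.
  - apply cyclic_plane_diag_cone_cases; auto; lra.
  - intros [HP|HP]; apply (cyclic_plane_ext _ _ _ _ (same_set_refl _) (same_set_sym _ _ HP));
      apply cyclic_plane_diag_cone; auto.
    rewrite <- Hu; ring.
Qed.

Lemma diag_cone_sphere_proj_hyperbola (k s u : R) (v : pt3) :
  k <> 0 -> s <> 0 -> u <> 0 -> A = k ^ 2 -> s ^ 2 = B - A -> u ^ 2 = A - C ->
  diag_cone A B C v -> sphere2 v ->
  hyperbola (0, 0) (0, 1) (1, 0) (k / u) (k / s) (proj_yz v).
Proof.
  destruct v as [[x y] z]; unfold diag_cone, diag_form, sphere2; rewrite dot3E.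
  intros Hk Hs Hu HA Hs2 Hu2 Hv Hsph.
  assert (E : u ^ 2 * z ^ 2 - s ^ 2 * y ^ 2 = k ^ 2).
  { rewrite Hu2, Hs2, <- HA.
    transitivity (A * (x * x + y * y + z * z) - (A * x ^ 2 + B * y ^ 2 + C * z ^ 2)); [ring|].
    rewrite Hv, Hsph; ring. }
  unfold hyperbola, proj_yz, sub2, dot2; cbn [fst snd].
  replace ((y - 0) * 0 + (z - 0) * 1) with z by ring.
  replace ((y - 0) * 1 + (z - 0) * 0) with y by ring.
  replace (z ^ 2 / (k / u) ^ 2 - y ^ 2 / (k / s) ^ 2)
    with ((u ^ 2 * z ^ 2 - s ^ 2 * y ^ 2) / k ^ 2) by (field; auto).
  rewrite E; field; exact Hk.
Qed.

End DiagonalCone.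

Lemma trace_yz_ext (P P' : pt3 -> Prop) : same_set P P' -> same_set (trace_yz P) (trace_yz P').
Proof. intros H w; apply H. Qed.

Lemma ex_trace_yz_iff (Pred : (pt3 -> Prop) -> Prop) (P1 P2 : pt3 -> Prop) (L : pt2 -> Prop) :
  (forall P, Pred P <-> same_set P P1 \/ same_set P P2) ->
  (exists P, Pred P /\ same_set L (trace_yz P)) <->
  same_set L (trace_yz P1) \/ same_set L (trace_yz P2).
Proof.
  intros HPred; split.
  - intros (P & HP & HL).
    destruct (proj1 (HPred P) HP) as [H|H]; [left|right];
      exact (proj1 (same_set_trans_r _ _ _ (trace_yz_ext _ _ H)) HL).
  - intros [HL|HL]; [exists P1|exists P2]; split; try exact HL; apply HPred;
      [left|right]; apply same_set_refl.
Qed.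

Lemma line2_origin_trace_yz (s u : R) (d : pt2) :
  s <> 0 -> snd d <> 0 -> s * fst d + u * snd d = 0 ->
  same_set (line2 (0, 0) d) (trace_yz (normal_plane (0, s, u))).
Proof.
  destruct d as [d1 d2]; cbn [fst snd]; intros Hs Hd2 Hd [w1 w2].
  unfold line2, trace_yz, normal_plane, add2, scal2; rewrite dot3E; cbn [fst snd].
  split.
  - intros [t Ht]; injection Ht as -> ->.
    transitivity (t * (s * d1 + u * d2)); [ring|rewrite Hd; ring].
  - intro Hw; exists (w2 / d2); f_equal; [|field; exact Hd2].
    assert (E : s * (w1 - w2 / d2 * d1) = 0).
    { transitivity ((0 * 0 + s * w1 + u * w2) - w2 / d2 * (s * d1 + u * d2));
        [field; exact Hd2|rewrite Hw, Hd; ring]. }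
    apply Rmult_integral in E as [E|E]; lra.
Qed.

Lemma normal_planes_distinct (s u : R) :
  0 < s -> 0 < u -> ~ same_set (normal_plane (0, s, u)) (normal_plane (0, s, - u)).
Proof.
  intros Hs Hu H.
  assert (h : normal_plane (0, s, u) (0, u, s))
    by (apply H; unfold normal_plane; rewrite dot3E; ring).
  unfold normal_plane in h; rewrite dot3E in h; nra.
Qed.

Lemma hyp_data_ok_yz (p q : R) : 0 < p -> 0 < q -> hyp_data_ok (0, 1) (1, 0) p q.
Proof. unfold hyp_data_ok, dot2; cbn [fst snd]; intros; repeat split; auto; ring. Qed.

Lemma is_asymptote_yz_axes (p q s u : R) (L : pt2 -> Prop) :
  0 < p -> s <> 0 -> s * q = u * p ->
  is_asymptote (0, 0) (0, 1) (1, 0) p q L <->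
  same_set L (trace_yz (normal_plane (0, s, - u))) \/
  same_set L (trace_yz (normal_plane (0, s, u))).
Proof.
  intros Hp Hs Hsq; unfold is_asymptote.
  rewrite (same_set_trans_r _ _ _
             (line2_origin_trace_yz s (- u) (add2 (scal2 p (0, 1)) (scal2 q (1, 0))) Hs
                ltac:(cbn; lra) ltac:(cbn; lra))).
  rewrite (same_set_trans_r _ _ _
             (line2_origin_trace_yz s u (add2 (scal2 p (0, 1)) (scal2 (- q) (1, 0))) Hs
                ltac:(cbn; lra) ltac:(cbn; lra))).
  reflexivity.
Qed.

Theorem mainTheorem8 (a b c : R) (hba : b < a) (hb : 0 < b) (hc : 0 < c) :
  (* C has exactly two cyclic planes *)
  (exists P1 P2 : pt3 -> Prop,
      cyclic_plane (cone a b c) P1 /\ cyclic_plane (cone a b c) P2 /\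
      ~ same_set P1 P2 /\
      forall P, cyclic_plane (cone a b c) P -> same_set P P1 \/ same_set P P2) /\
  (* there is a hyperbola in the yz-plane ... *)
  exists (w0 e1 e2 : pt2) (p q : R),
    hyp_data_ok e1 e2 p q /\
    (* ... containing the projection of the spherical conic C ∩ S^2 ... *)
    (forall v : pt3, cone a b c v -> sphere2 v -> hyperbola w0 e1 e2 p q (proj_yz v)) /\
    (* ... whose asymptotes are exactly the traces of the cyclic planes on the yz-plane *)
    (forall L : pt2 -> Prop,
        is_asymptote w0 e1 e2 p q L <->
        exists P, cyclic_plane (cone a b c) P /\ same_set L (trace_yz P)).
Proof.
  set (A := / a ^ 2); set (B := / b ^ 2); set (C := - / c ^ 2).
  assert (HA : 0 < A) by (apply Rinv_0_lt_compat, pow_lt; lra).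
  assert (HAB : A < B)
    by (apply Rinv_lt_contravar; [apply Rmult_lt_0_compat; apply pow_lt|]; nra).
  assert (HC : C < 0)
    by (enough (0 < / c ^ 2) by (unfold C; lra); apply Rinv_0_lt_compat, pow_lt; lra).
  set (s := sqrt (B - A)); set (u := sqrt (A - C)).
  assert (Hs0 : 0 < s) by (apply sqrt_lt_R0; lra).
  assert (Hu0 : 0 < u) by (apply sqrt_lt_R0; lra).
  assert (Hs : s ^ 2 = B - A) by (apply pow2_sqrt; lra).
  assert (Hu : u ^ 2 = A - C) by (apply pow2_sqrt; lra).
  assert (Hcyc : forall P, cyclic_plane (cone a b c) P <->
            same_set P (normal_plane (0, s, u)) \/ same_set P (normal_plane (0, s, - u))).
  { intro P; rewrite <- (cyclic_plane_diag_cone_iff A B C s u P) by (auto; lra).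
    pose proof (cone_diag_cone a b c) as HK.
    split; apply cyclic_plane_ext; auto using same_set_sym, same_set_refl. }
  split.
  - exists (normal_plane (0, s, u)), (normal_plane (0, s, - u)).
    split; [apply Hcyc; left; apply same_set_refl|].
    split; [apply Hcyc; right; apply same_set_refl|].
    split; [now apply normal_planes_distinct|intros P; apply Hcyc].
  - assert (Ha : 0 < / a) by (apply Rinv_0_lt_compat; lra).
    exists (0, 0), (0, 1), (1, 0), (/ a / u), (/ a / s).
    split; [apply hyp_data_ok_yz; apply Rdiv_lt_0_compat; assumption|split].
    + intros v Hv Hsph.
      apply (diag_cone_sphere_proj_hyperbola A B C (/ a) s u v); try lra.
      * unfold A; rewrite pow_inv; reflexivity.
      * now apply cone_diag_cone.
      * exact Hsph.
    + intro L; assert (Hsq : s * (/ a / s) = u * (/ a / u)) by (field; lra).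
      rewrite (is_asymptote_yz_axes _ _ s u L (Rdiv_lt_0_compat _ _ Ha Hu0) ltac:(lra) Hsq).
      rewrite (ex_trace_yz_iff _ _ _ L Hcyc); tauto.
Qed.
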